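(* Let $G$ be a $\lambda$-graph and $Q$ a query over $G$. Then $Q^{\#}$ is a sharing equivalence if and only if $[n]=[m]$ (equality of locally nameless terms) for all nodes $n,m$ with $n\,Q\,m$.
   Context: A pre-$\lambda$-graph is a directed graph whose nodes are of four kinds: an application node $@(n_1,n_2)$ has exactly two children, its left child $n_1$ and its right child $n_2$; an abstraction node $\lambda(n)$ has exactly one child, its body $n$; a free variable node has no children and carries an atom $\mathrm{id}(n)$ from a fixed set of atoms, distinct free variable nodes carrying distinct atoms; a bound variable node $\mathrm{var}(l)$ has exactly one outgoing binding edge, to an abstraction node $l$ (its binder). Letters $l,l'$ denote abstraction nodes. A trace is a finite sequence of directions from $\{\swarrow,\downarrow,\searrow\}$; $\epsilon$ is the empty trace and $d\cdot\tau$ is the trace $\tau$ extended by one final step $d$. Paths $n\xrightarrow{\tau}m$ are defined inductively: $n\xrightarrow{\epsilon}n$; if $n\xrightarrow{\tau}\lambda(m)$ then $n\xrightarrow{\downarrow\cdot\tau}m$; if $n\xrightarrow{\tau}@(m_1,m_2)$ then $n\xrightarrow{\swarrow\cdot\tau}m_1$ and $n\xrightarrow{\searrow\cdot\tau}m_2$ (binding edges are never followed). We write $n\xrightarrow{\tau}$ if $n\xrightarrow{\tau}m$ for some $m$. The path $n\xrightarrow{\tau}$ crosses a node $m$ if either $n\xrightarrow{\tau}m$, or $\tau=d\cdot\tau'$ and $n\xrightarrow{\tau'}$ crosses $m$. A root is a node $r$ such that the only path ending in $r$ has the empty trace. A node $m$ dominates $n$ if every path from a root to $n$ crosses $m$.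 A $\lambda$-graph is a pre-$\lambda$-graph that has finitely many nodes, is acyclic ($n\xrightarrow{\tau}n$ holds only for $\tau=\epsilon$), and is dominated (every bound variable node $\mathrm{var}(l)$ is dominated by its binder $l$). Two nodes are homogeneous if both are application nodes, or both abstraction nodes, or both free variable nodes, or both bound variable nodes; a binary relation $R$ on nodes is homogeneous if it only relates homogeneous nodes. Rules: $(\swarrow)$: $@(n_1,n_2)\,R\,@(m_1,m_2)$ implies $n_1\,R\,m_1$; $(\searrow)$: $@(n_1,n_2)\,R\,@(m_1,m_2)$ implies $n_2\,R\,m_2$; $(\downarrow)$: $\lambda(n)\,R\,\lambda(m)$ implies $n\,R\,m$; $(\circlearrowright)$: $\mathrm{var}(n)\,R\,\mathrm{var}(m)$ implies $n\,R\,m$. $R$ is propagated if closed under $(\swarrow),(\downarrow),(\searrow)$. $R$ is open if $n\,R\,m$ implies $n=m$ for all free variable nodes $n,m$. A blind bisimulation is a homogeneous propagated relation; a bisimulation is a blind bisimulation closed also under $(\circlearrowright)$. A blind sharing equivalence is a blind bisimulation that is an equivalence relation; a sharing equivalence is an open bisimulation that is an equivalence relation. $R^*$ denotes the reflexive–symmetric–transitive closure of $R$; $R^{\Downarrow}$ (propagation) is the smallest propagated relation containing $R$; $R^{\#}$ (spreading) is the smallest propagated equivalence relation containing $R$. A query over $G$ is a binary relation on the roots of $G$. Readback. Locally nameless terms: $t::=\underline{k}\mid \mathsf{x}\mid t\,s\mid \lambda.t$ with $k\in\mathbb N$ (bound variable as de Bruijn index) and $\mathsf{x}$ an atom (free variable);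 equality is syntactic. For a path $n\xrightarrow{\tau}$ crossing an abstraction node $l$, the index $\mathrm{idx}(l,n\xrightarrow{\tau})$ is defined by induction on the crossing: it is $0$ if $n\xrightarrow{\tau}l$; for $n\xrightarrow{d\cdot\tau}l'$ with $l'$ an abstraction node different from $l$ it is $\mathrm{idx}(l,n\xrightarrow{\tau})+1$; for $n\xrightarrow{d\cdot\tau}m$ with $m$ not an abstraction node it is $\mathrm{idx}(l,n\xrightarrow{\tau})$. For a root $r$ and a path $r\xrightarrow{\tau}n$, the readback $[r\xrightarrow{\tau}n]$ is: $\underline{\mathrm{idx}(l,r\xrightarrow{\tau})}$ if $n=\mathrm{var}(l)$ (well defined by domination); $\mathrm{id}(n)$ if $n$ is a free variable node; $\lambda.[r\xrightarrow{\downarrow\cdot\tau}m]$ if $n=\lambda(m)$; $[r\xrightarrow{\swarrow\cdot\tau}n_1]\,[r\xrightarrow{\searrow\cdot\tau}n_2]$ if $n=@(n_1,n_2)$. For a root $r$, $[r]:=[r\xrightarrow{\epsilon}r]$. *)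

From mathcomp Require Import all_boot.
Set Implicit Arguments. Unset Strict Implicit. Unset Printing Implicit Defensive.

(* A node's kind and its outgoing edges. [A] is the fixed set of atoms. *)
Inductive node (A V : Type) : Type :=
| App  of V & V
| Abs  of V
| FVar of A
| BVar of V.           (* var(l), binding edge to l *)
Arguments App {A V}. Arguments Abs {A V}. Arguments FVar {A V}. Arguments BVar {A V}.

Inductive dir := DLeft | DDown | DRight.

(* A trace is a list of directions; [d :: tau] is the trace d.tau,
   i.e. tau extended by one final step d. *)
Notation trace := (seq dir).

Section Graph.
Variables (A : Type) (V : finType) (g : V -> node A V).

Definition is_abs (n : V) : Prop := exists b, g n = Abs b.

Definition pre_lambda_graph : Prop :=
  (forall n l, g n = BVar l -> is_abs l) /\
  (forall n m a, g n = FVar a -> g m = FVar a -> n = m).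

(* Paths n --tau--> m (binding edges are never followed). *)
Inductive path : V -> trace -> V -> Prop :=
| path_nil n : path n [::] n
| path_down n tau m b : path n tau m -> g m = Abs b -> path n (DDown :: tau) b
| path_left n tau m m1 m2 : path n tau m -> g m = App m1 m2 -> path n (DLeft :: tau) m1
| path_right n tau m m1 m2 : path n tau m -> g m = App m1 m2 -> path n (DRight :: tau) m2.

Fixpoint crosses (n : V) (tau : trace) (m : V) : Prop :=
  path n tau m \/ (match tau with [::] => False | _ :: tau' => crosses n tau' m end).

Definition is_root (r : V) : Prop := forall n tau, path n tau r -> tau = [::].

Definition dominates (m n : V) : Prop :=
  forall r tau, is_root r -> path r tau n -> crosses r tau m.

Definition acyclic : Prop := forall n tau, path n tau n -> tau = [::].

Definition dominated : Prop := forall n l, g n = BVar l -> dominates l n.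

(* Finiteness is given by V being a finType. *)
Definition lambda_graph : Prop := pre_lambda_graph /\ acyclic /\ dominated.

Definition homogeneous (R : V -> V -> Prop) : Prop :=
  forall n m, R n m ->
    match g n, g m with
    | App _ _, App _ _ | Abs _, Abs _ | FVar _, FVar _ | BVar _, BVar _ => True
    | _, _ => False
    end.

Definition propagated (R : V -> V -> Prop) : Prop :=
  (forall n m n1 n2 m1 m2, R n m -> g n = App n1 n2 -> g m = App m1 m2 -> R n1 m1) /\
  (forall n m n1 n2 m1 m2, R n m -> g n = App n1 n2 -> g m = App m1 m2 -> R n2 m2) /\
  (forall n m n1 m1, R n m -> g n = Abs n1 -> g m = Abs m1 -> R n1 m1).

Definition closed_var (R : V -> V -> Prop) : Prop :=
  forall n m l l', R n m -> g n = BVar l -> g m = BVar l' -> R l l'.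

Definition open_rel (R : V -> V -> Prop) : Prop :=
  forall n m a b, R n m -> g n = FVar a -> g m = FVar b -> n = m.

Definition equivalence (R : V -> V -> Prop) : Prop :=
  (forall n, R n n) /\ (forall n m, R n m -> R m n) /\
  (forall n m p, R n m -> R m p -> R n p).

Definition blind_bisimulation (R : V -> V -> Prop) : Prop :=
  homogeneous R /\ propagated R.

Definition bisimulation (R : V -> V -> Prop) : Prop :=
  blind_bisimulation R /\ closed_var R.

Definition sharing_equivalence (R : V -> V -> Prop) : Prop :=
  open_rel R /\ bisimulation R /\ equivalence R.

Inductive spread (R : V -> V -> Prop) : V -> V -> Prop :=
| sp_base n m : R n m -> spread R n m
| sp_refl n : spread R n n
| sp_sym n m : spread R n m -> spread R m n
| sp_trans n m p : spread R n m -> spread R m p -> spread R n p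
| sp_left n m n1 n2 m1 m2 :
    spread R n m -> g n = App n1 n2 -> g m = App m1 m2 -> spread R n1 m1
| sp_right n m n1 n2 m1 m2 :
    spread R n m -> g n = App n1 n2 -> g m = App m1 m2 -> spread R n2 m2
| sp_down n m n1 m1 :
    spread R n m -> g n = Abs n1 -> g m = Abs m1 -> spread R n1 m1.

Definition query (Q : V -> V -> Prop) : Prop :=
  forall n m, Q n m -> is_root n /\ is_root m.

Inductive lnterm : Type :=
| LBound of nat
| LFree of A
| LApp of lnterm & lnterm
| LLam of lnterm.

Inductive Idx (l n : V) : trace -> nat -> Prop :=
| idx_here tau : path n tau l -> Idx l n tau 0
| idx_abs d tau l' b k :
    path n (d :: tau) l' -> g l' = Abs b -> l' <> l ->
    Idx l n tau k -> Idx l n (d :: tau) k.+1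
| idx_other d tau m k :
    path n (d :: tau) m -> ~ is_abs m ->
    Idx l n tau k -> Idx l n (d :: tau) k.

Inductive Readback (r : V) : trace -> V -> lnterm -> Prop :=
| rb_bvar tau n l k :
    path r tau n -> g n = BVar l -> Idx l r tau k -> Readback r tau n (LBound k)
| rb_fvar tau n a :
    path r tau n -> g n = FVar a -> Readback r tau n (LFree a)
| rb_abs tau n b t :
    path r tau n -> g n = Abs b -> Readback r (DDown :: tau) b t ->
    Readback r tau n (LLam t)
| rb_app tau n n1 n2 t1 t2 :
    path r tau n -> g n = App n1 n2 ->
    Readback r (DLeft :: tau) n1 t1 -> Readback r (DRight :: tau) n2 t2 ->
    Readback r tau n (LApp t1 t2).

Definition readback_root (r : V) (t : lnterm) : Prop := Readback r [::] r t.

Definition same_readback (n m : V) : Prop :=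
  exists t, readback_root n t /\ readback_root m t.

End Graph.

From Pilot Require Import Defs.
From mathcomp Require Import all_boot zify.
From Stdlib Require Import Relation_Operators.

Set Implicit Arguments. Unset Strict Implicit. Unset Printing Implicit Defensive.

(* Paths are deterministic (they iterate the partial "child" function), and
   acyclicity bounds their length by #|V|.
   (=>) A blind sharing equivalence follows paths in lockstep and never relates
   the two ends of a nonempty path (else iterating it along the relation would
   give arbitrarily long paths).  Hence binders related by the bisimulation
   have equal de Bruijn indices along a common trace, and the readback of one
   root, which exists by acyclicity and domination, transfers along the
   relation to the readback of the other root.
   (<=) Call n, m aligned when they are reached by the same trace from two
   Q-related roots.  Equal readbacks make the aligned relation homogeneous,
   propagated, open, and closed under binders (equal indices point to binders
   at a common trace); its equivalence closure is thus a sharing equivalence,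
   and it coincides with Q^#, the least propagated equivalence containing Q. *)

Section LambdaGraphs.
Variables (A : Type) (V : finType) (g : V -> node A V).

Local Notation gpath := (Defs.path g).

(* The d-child of a node, if any: paths are exactly the iterations of
   this partial function, which makes them deterministic. *)
Definition child (m : V) (d : dir) : option V :=
  match d, g m with
  | DLeft, App n1 _ => Some n1
  | DRight, App _ n2 => Some n2
  | DDown, Abs n1 => Some n1
  | _, _ => None
  end.

(* Following a trace from n; the last direction of the list is taken first. *)
Fixpoint walk (n : V) (tau : trace) : option V :=
  if tau is d :: tau' then obind (child^~ d) (walk n tau') else Some n.

Lemma path_walk n tau m : gpath n tau m <-> walk n tau = Some m.
Proof.
split.
  by elim=> [//|{}n {}tau {}m ? _ IH E|{}n {}tau {}m ? ? _ IH E|{}n {}tau {}m ? ? _ IH E];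
    rewrite /= IH /= /child E.
elim: tau m => [m [<-]|d tau IH m /=]; first exact: path_nil.
case E: (walk n tau) => [x|] //=; have Px := IH _ E.
rewrite /child; case: d; case Ex: (g x) => [n1 n2|n1|a|l] // [<-].
- exact: path_left Px Ex.
- exact: path_down Px Ex.
- exact: path_right Px Ex.
Qed.

Lemma path_det n tau m m' : gpath n tau m -> gpath n tau m' -> m = m'.
Proof. by move=> /path_walk E /path_walk; rewrite E => -[]. Qed.

Lemma path_cons n d tau c :
  gpath n (d :: tau) c <-> exists2 m, gpath n tau m & child m d = Some c.
Proof.
rewrite path_walk /=; split.
  by case E: (walk n tau) => [m|] //= ?; exists m => //; apply/path_walk.
by case=> m /path_walk -> .
Qed.

(* Concatenation and splitting of paths: trace tau2 ++ tau1 is tau1 then tau2. *)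
Lemma walk_cat n tau1 tau2 :
  walk n (tau2 ++ tau1) = obind (walk^~ tau2) (walk n tau1).
Proof. by elim: tau2 => [|d tau2 /= ->]; case: (walk n tau1). Qed.

Lemma path_cat n tau1 m tau2 p :
  gpath n tau1 m -> gpath m tau2 p -> gpath n (tau2 ++ tau1) p.
Proof. by move=> /path_walk E1 /path_walk E2; apply/path_walk; rewrite walk_cat E1. Qed.

Lemma path_split n tau1 tau2 p :
  gpath n (tau2 ++ tau1) p -> exists2 m, gpath n tau1 m & gpath m tau2 p.
Proof.
move/path_walk; rewrite walk_cat; case E: (walk n tau1) => [m|] //= ?.
by exists m; apply/path_walk.
Qed.

(* In an acyclic graph, the endpoints of the suffixes of a path are pairwise
   distinct, so a path visits at most #|V| nodes. *)
Lemma path_size_lt : acyclic g -> forall n tau m, gpath n tau m -> size tau < #|V|.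
Proof.
move=> Hac n tau m /path_walk Etau.
have Hdrop i : exists x, walk n (drop i tau) = Some x.
  move: Etau; rewrite -{1}(cat_take_drop i tau) walk_cat.
  by case: (walk n (drop i tau)) => // x _; exists x.
pose f (i : 'I_(size tau).+1) := odflt n (walk n (drop i tau)).
have Pf (i : 'I_(size tau).+1) : gpath n (drop i tau) (f i).
  by apply/path_walk; rewrite /f; have [x ->] := Hdrop i.
have f_lt (i j : 'I_(size tau).+1) : (i < j)%N -> f i <> f j.
  move=> lt_ij Efij.
  have Eij : drop i tau = take (j - i) (drop i tau) ++ drop j tau.
    by rewrite -{1}(cat_take_drop (j - i) (drop i tau)) drop_drop subnK // ltnW.
  have := Pf i; rewrite Eij => /path_split [y Py].
  rewrite (path_det Py (Pf j)) -Efij => /Hac/(congr1 size).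
  have := ltn_ord j; rewrite size_take size_drop /minn; case: ifP => /= _; lia.
have inj_f : injective f.
  move=> i j Eij; case: (ltngtP i j) => [/f_lt|/f_lt|/val_inj] //.
  by move/(_ (esym Eij)).
by have := leq_card f inj_f; rewrite card_ord.
Qed.

Definition kind (x : node A V) : nat :=
  match x with App _ _ => 0 | Abs _ => 1 | FVar _ => 2 | BVar _ => 3 end.

Lemma homogeneousP (R : V -> V -> Prop) :
  homogeneous g R <-> forall n m, R n m -> kind (g n) = kind (g m).
Proof.
by split=> H n m /H; case: (g n) => [? ?|?|?|?]; case: (g m).
Qed.

Lemma is_absE x : is_abs g x <-> kind (g x) = 1.
Proof.
rewrite /is_abs; split=> [[b ->] //|].
by case: (g x) => [? ?|b|?|?] // _; exists b.
Qed.

Lemma kind_child m m' d c :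
  kind (g m) = kind (g m') -> child m d = Some c -> exists c', child m' d = Some c'.
Proof.
by rewrite /child; case: d; case: (g m) => [? ?|?|?|?]; case: (g m') => [? ?|?|?|?] // *; eexists.
Qed.

Lemma propagatedP (R : V -> V -> Prop) :
  propagated g R <-> forall m m' d c c',
    R m m' -> child m d = Some c -> child m' d = Some c' -> R c c'.
Proof.
split=> [[Hl [Hr Hd]] m m' [] c c' Rm|H]; rewrite /child.
- by case E: (g m) => // [n1 n2]; case E': (g m') => // [n1' n2'] [<-] [<-]; apply: Hl Rm E E'.
- by case E: (g m) => // [n1]; case E': (g m') => // [n1'] [<-] [<-]; apply: Hd Rm E E'.
- by case E: (g m) => // [n1 n2]; case E': (g m') => // [n1' n2'] [<-] [<-]; apply: Hr Rm E E'.
split; [|split].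
- by move=> n m ? ? ? ? Rnm En Em; apply: (H _ _ DLeft _ _ Rnm); rewrite /child ?En ?Em.
- by move=> n m ? ? ? ? Rnm En Em; apply: (H _ _ DRight _ _ Rnm); rewrite /child ?En ?Em.
- by move=> n m ? ? Rnm En Em; apply: (H _ _ DDown _ _ Rnm); rewrite /child ?En ?Em.
Qed.

Lemma propagated_path (R : V -> V -> Prop) x y tau z w :
  propagated g R -> R x y -> gpath x tau z -> gpath y tau w -> R z w.
Proof.
move=> /propagatedP Hp Rxy; elim: tau z w => [|d tau IH] z w Pz Pw.
  by rewrite -(path_det (path_nil g x) Pz) -(path_det (path_nil g y) Pw).
case/path_cons: Pz => m Pm Cm; case/path_cons: Pw => m' Pm' Cm'.
exact: Hp (IH _ _ Pm Pm') Cm Cm'.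
Qed.

Lemma transport (R : V -> V -> Prop) x y tau z :
  blind_bisimulation g R -> R x y -> gpath x tau z ->
  exists2 w, gpath y tau w & R z w.
Proof.
move=> [/homogeneousP Hh Hp] Rxy; elim: tau z => [|d tau IH] z Pz.
  by rewrite -(path_det (path_nil g x) Pz); exists y => //; exact: path_nil.
have /path_cons [m Pm Cm] := Pz; have [w Pw Rmw] := IH _ Pm.
have [c Cw] := kind_child (Hh _ _ Rmw) Cm.
have Pc : gpath y (d :: tau) c by apply/path_cons; exists w.
by exists c => //; exact: propagated_path Hp Rxy Pz Pc.
Qed.

Lemma Idx_nilE l r k : Idx g l r [::] k -> l = r /\ k = 0.
Proof.
by move=> I; inversion I; subst; split=> //; apply: path_det; [eassumption|exact: path_nil].
Qed.

Lemma Idx_consE l r d tau k : Idx g l r (d :: tau) k ->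
  (gpath r (d :: tau) l /\ k = 0) \/
  exists e k0, [/\ gpath r (d :: tau) e, Idx g l r tau k0
                 & k = (kind (g e) == 1) + k0].
Proof.
move=> I; inversion I as [? P|? ? e b k0 P E _ I0|? ? e k0 P N I0]; subst; first by left.
- by right; exists e, k0; rewrite E.
- right; exists e, k; split=> //.
  by case: eqP => // /is_absE.
Qed.

Lemma Idx_crossing l r tau k : Idx g l r tau k ->
  exists tau1 tau2, tau = tau2 ++ tau1 /\ gpath r tau1 l.
Proof.
elim=> [{}tau P|d {}tau ? ? ? _ _ _ _ [t1 [t2 [-> P]]]|d {}tau ? ? _ _ _ [t1 [t2 [-> P]]]].
- by exists tau, [::].
- by exists t1, (d :: t2).
- by exists t1, (d :: t2).
Qed.

Lemma Idx_exists r l tau x :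
  gpath r tau x -> crosses g r tau l -> exists k, Idx g l r tau k.
Proof.
elim: tau x => [|d tau IH] x P C.
  by case: C => [P0|//]; exists 0; exact: idx_here.
case: (eqVneq x l) => [<-|Nxl]; first by exists 0; exact: idx_here.
have [k Ik] : exists k, Idx g l r tau k.
  have /path_cons [m Pm _] := P.
  by case: C => [Pl|]; [case/eqP: Nxl; exact: path_det P Pl|exact: IH Pm].
case: (boolP (kind (g x) == 1)) => /eqP Kx.
- have [b Eb] := (is_absE x).2 Kx.
  by exists k.+1; apply: idx_abs P Eb _ Ik; apply/eqP.
- by exists k; apply: idx_other P _ Ik => /is_absE.
Qed.

Section BlindSharing.
Variable R : V -> V -> Prop.
Hypothesis Hac : acyclic g.
Hypothesis Hbisim : blind_bisimulation g R.
Hypothesis Heq : equivalence R.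

(* No nonempty path joins two R-related nodes: iterating it along R would
   produce arbitrarily long paths. *)
Lemma no_related_path x y tau : R x y -> gpath x tau y -> tau = [::].
Proof.
move=> Rxy Pxy; have [Rrefl [_ Rtrans]] := Heq.
case: tau Pxy => // d tau Pxy; exfalso.
have long k : exists tau' z, [/\ k <= size tau', gpath x tau' z & R x z].
  elim: k => [|k [tau' [z [Hk Pz Rxz]]]]; first by exists [::], x; split; [|exact: path_nil|].
  have [w Pw Ryw] := transport Hbisim Rxz Pxy.
  exists ((d :: tau) ++ tau'), w; split; last exact: Rtrans Rxy Ryw.
  - by rewrite size_cat /=; lia.
  - exact: path_cat Pz Pw.
have [tau' [z [Hk Pz _]]] := long #|V|.
by have := path_size_lt Hac Pz; rewrite ltnNge Hk.
Qed.

Lemma binder_not_crossed r r' d tau l l' k :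
  R r r' -> gpath r (d :: tau) l -> Idx g l' r' tau k -> R l l' -> False.
Proof.
move=> Rrr' Pl I Rll'; have [_ [Rsym Rtrans]] := Heq.
have [w Pw Rlw] := transport Hbisim Rrr' Pl.
have [tau1 [tau2 [Etau Pl']]] := Idx_crossing I.
have /path_split [m Pm Pmw] : gpath r' ((d :: tau2) ++ tau1) w by rewrite cat_cons -Etau.
rewrite (path_det Pm Pl') in Pmw.
by have := no_related_path (Rtrans _ _ _ (Rsym _ _ Rll') Rlw) Pmw.
Qed.

(* Related binders have the same index along a common trace from related
   nodes: this is where bound variables are read back alike. *)
Lemma Idx_related r r' : R r r' -> forall tau l l' k k',
  Idx g l r tau k -> Idx g l' r' tau k' -> R l l' -> k = k'.
Proof.
move=> Rrr'; have [_ [Rsym _]] := Heq; have [/homogeneousP Hh Hp] := Hbisim.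
elim=> [|d tau IH] l l' k k'; first by move=> /Idx_nilE [_ ->] /Idx_nilE [_ ->].
move=> /Idx_consE [[Pl ->]|[e [k0 [Pe I ->]]]]
       /Idx_consE [[Pl' ->]|[e' [k0' [Pe' I' ->]]]] Rll' //.
- by case: (binder_not_crossed Rrr' Pl I' Rll').
- by case: (binder_not_crossed (Rsym _ _ Rrr') Pl' I (Rsym _ _ Rll')).
- by rewrite (Hh _ _ (propagated_path Hp Rrr' Pe Pe')) (IH _ _ _ _ I I' Rll').
Qed.

End BlindSharing.

Definition term_kind (t : lnterm A) : nat :=
  match t with LApp _ _ => 0 | LLam _ => 1 | LFree _ => 2 | LBound _ => 3 end.

Definition subterm (t : lnterm A) (d : dir) : option (lnterm A) :=
  match d, t with
  | DLeft, LApp t1 _ => Some t1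
  | DRight, LApp _ t2 => Some t2
  | DDown, LLam t1 => Some t1
  | _, _ => None
  end.

Lemma Readback_kind r tau n t : Readback g r tau n t -> kind (g n) = term_kind t.
Proof. by case=> [? ? ? ? _ -> _|? ? ? _ ->|? ? ? ? _ -> _|? ? ? ? ? ? _ -> _ _]. Qed.

Lemma Readback_child r tau n t d c : Readback g r tau n t -> child n d = Some c ->
  exists2 t', subterm t d = Some t' & Readback g r (d :: tau) c t'.
Proof.
rewrite /child; case=> [? ? ? ? _ -> _|? ? ? _ ->|? ? b t' _ -> Rb|? ? n1 n2 t1 t2 _ -> R1 R2];
  case: d => // -[<-]; by eexists.
Qed.

Lemma Readback_leaf r tau n t : Readback g r tau n t ->
  match t with
  | LFree a => g n = FVar a
  | LBound k => exists2 l, g n = BVar l & Idx g l r tau k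
  | _ => True
  end.
Proof. by case=> // ? ? l ? _ ? ?; exists l. Qed.

Lemma Readback_along r r' t tau n n' :
  readback_root g r t -> readback_root g r' t -> gpath r tau n -> gpath r' tau n' ->
  exists u, Readback g r tau n u /\ Readback g r' tau n' u.
Proof.
move=> Rr Rr'; elim: tau n n' => [|d tau IH] n n' P P'.
  by rewrite -(path_det (path_nil g r) P) -(path_det (path_nil g r') P'); exists t.
case/path_cons: P => m Pm Cm; case/path_cons: P' => m' Pm' Cm'.
have [u [U U']] := IH _ _ Pm Pm'.
have [v Ev Rv] := Readback_child U Cm; have [v' Ev' Rv'] := Readback_child U' Cm'.
have Evv' : v = v' by congruence.
by exists v; rewrite {2}Evv'.
Qed.

(* In a lambda-graph the readback along any path from a root exists:
   acyclicity bounds the recursion and domination defines the indices. *)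
Lemma Readback_exists r : lambda_graph g -> is_root g r ->
  forall tau x, gpath r tau x -> exists t, Readback g r tau x t.
Proof.
move=> [_ [Hac Hdom]] Hr.
suff H N tau x : #|V| <= N + size tau -> gpath r tau x -> exists t, Readback g r tau x t.
  by move=> tau x; apply: H; exact: leq_addr.
elim: N tau x => [|N IH] tau x HN P.
  by have := path_size_lt Hac P; rewrite ltnNge HN.
have HN' d : #|V| <= N + size (d :: tau) by rewrite /= addnS.
case Ex: (g x) => [n1 n2|b|a|l].
- have [t1 R1] := IH _ _ (HN' DLeft) (path_left P Ex).
  have [t2 R2] := IH _ _ (HN' DRight) (path_right P Ex).
  by exists (LApp t1 t2); exact: rb_app P Ex R1 R2.
- have [t Rt] := IH _ _ (HN' DDown) (path_down P Ex).
  by exists (LLam t); exact: rb_abs P Ex Rt.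
- by exists (LFree a); exact: rb_fvar P Ex.
- have [k Ik] := Idx_exists P (Hdom _ _ Ex r tau Hr P).
  by exists (LBound A k); exact: rb_bvar P Ex Ik.
Qed.

Lemma Readback_transfer (R : V -> V -> Prop) r r' :
  lambda_graph g -> sharing_equivalence g R -> R r r' -> is_root g r' ->
  forall tau x t, Readback g r tau x t ->
  forall x', gpath r' tau x' -> Readback g r' tau x' t.
Proof.
move=> [_ [Hac Hdom]] [Hopen [[Hbisim Hvar] Heq]] Rrr' Hr'.
have [/homogeneousP Hh Hp] := Hbisim.
move=> tau x t Rb x' P'; elim: Rb x' P' => {tau x t}
  [tau x l k P E I|tau x a P E|tau x b t P E _ IH|tau x n1 n2 t1 t2 P E _ IH1 _ IH2] x' P';
  have Rxx' := propagated_path Hp Rrr' P P'; have := Hh _ _ Rxx'; rewrite E;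
  case E': (g x') => [n1' n2'|b'|a'|l'] // _.
- have [k' I'] := Idx_exists P' (Hdom _ _ E' r' tau Hr' P').
  rewrite (Idx_related Hac Hbisim Heq Rrr' I I' (Hvar _ _ _ _ Rxx' E E')).
  exact: rb_bvar P' E' I'.
- by rewrite -(Hopen _ _ _ _ Rxx' E E') in P' *; exact: rb_fvar P' E.
- exact: rb_abs P' E' (IH _ (path_down P' E')).
- exact: rb_app P' E' (IH1 _ (path_left P' E')) (IH2 _ (path_right P' E')).
Qed.

Section EquivalenceClosure.
Variable R : V -> V -> Prop.
Hypothesis Hh : homogeneous g R.
Local Notation C := (clos_refl_sym_trans V R).

Lemma closure_kind n m : C n m -> kind (g n) = kind (g m).
Proof.
have /homogeneousP Hk := Hh.
by elim=> [? ? /Hk|//|? ? _ ->|? ? ? _ -> _ ->].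
Qed.

Lemma closure_propagated : propagated g R -> propagated g C.
Proof.
move=> /propagatedP Hp; apply/propagatedP => m m' d c c' Cm.
elim: Cm c c' => {m m'} [m m' Rm|m|m m' _ IH|m p m' Cmp IH1 _ IH2] c c' Cc Cc'.
- by apply: rst_step; exact: Hp Rm Cc Cc'.
- by move: Cc'; rewrite Cc => -[->]; exact: rst_refl.
- by apply: rst_sym; exact: IH.
- have [q Cq] := kind_child (closure_kind Cmp) Cc.
  exact: rst_trans (IH1 _ _ Cc Cq) (IH2 _ _ Cq Cc').
Qed.

Lemma closure_open : open_rel g R -> open_rel g C.
Proof.
move=> Ho n m a b Cnm; elim: Cnm a b => {n m} [n m Rnm|//|n m _ IH|n p m Cnp IH1 _ IH2] a b En Em.
- exact: Ho Rnm En Em.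
- by rewrite (IH _ _ Em En).
- have := closure_kind Cnp; rewrite En; case Ep: (g p) => // [c] _.
  by rewrite (IH1 _ _ En Ep) (IH2 _ _ Ep Em).
Qed.

Lemma closure_var : closed_var g R -> closed_var g C.
Proof.
move=> Hv n m l l' Cnm.
elim: Cnm l l' => {n m} [n m Rnm|n|n m _ IH|n p m Cnp IH1 _ IH2] l l' En Em.
- by apply: rst_step; exact: Hv Rnm En Em.
- by move: Em; rewrite En => -[->]; exact: rst_refl.
- by apply: rst_sym; exact: IH.
- have := closure_kind Cnp; rewrite En; case Ep: (g p) => // [l''] _.
  exact: rst_trans (IH1 _ _ En Ep) (IH2 _ _ Ep Em).
Qed.

Lemma closure_sharing :
  propagated g R -> open_rel g R -> closed_var g R -> sharing_equivalence g C.
Proof.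
move=> Hp Ho Hv; split; [exact: closure_open|split; [split; [split|]|]].
- by apply/homogeneousP; exact: closure_kind.
- exact: closure_propagated.
- exact: closure_var.
- by split; [exact: rst_refl|split; [exact: rst_sym|exact: rst_trans]].
Qed.

End EquivalenceClosure.

Lemma spread_propagated (Q : V -> V -> Prop) : propagated g (spread g Q).
Proof. by split; [exact: sp_left|split; [exact: sp_right|exact: sp_down]]. Qed.

Lemma spread_least (Q S : V -> V -> Prop) :
  propagated g S -> equivalence S -> (forall n m, Q n m -> S n m) ->
  forall n m, spread g Q n m -> S n m.
Proof.
move=> [Hl [Hr Hd]] [Srefl [Ssym Strans]] HQS n m.
elim=> {n m} [||? ? _|? ? ? _ H1 _ H2|? ? ? ? ? ? _ H|? ? ? ? ? ? _ H|? ? ? ? _ H];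
  by [exact: HQS|exact: Srefl|exact: Ssym|exact: Strans H1 H2|exact: Hl H|exact: Hr H|exact: Hd H].
Qed.

Lemma sharing_equivalence_ext (R S : V -> V -> Prop) :
  (forall n m, R n m <-> S n m) -> sharing_equivalence g R -> sharing_equivalence g S.
Proof.
move=> E [Ho [[[Hh /propagatedP Hp] Hv] [Hrefl [Hsym Htrans]]]].
split; [|split; [split; [split|]|]].
- by move=> n m a b /E; exact: Ho.
- by move=> n m /E; exact: Hh.
- by apply/propagatedP=> m m' d c c' /E Rm Cc Cc'; apply/E; exact: Hp Rm Cc Cc'.
- by move=> n m l l' /E Rnm En Em; apply/E; exact: Hv Rnm En Em.
- split; first by move=> n; apply/E.
  by split=> [n m /E/Hsym/E //|n m p /E H1 /E H2]; apply/E; exact: Htrans H1 H2.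
Qed.

Definition aligned (Q : V -> V -> Prop) (n m : V) : Prop :=
  exists r r' tau, [/\ Q r r', gpath r tau n & gpath r' tau m].

Lemma aligned_spread (Q : V -> V -> Prop) n m : aligned Q n m -> spread g Q n m.
Proof.
case=> r [r' [tau [Qrr' P P']]].
exact: propagated_path (spread_propagated Q) (sp_base g Qrr') P P'.
Qed.

Lemma Idx_aligned r r' l l' :
  is_abs g l -> is_abs g l' ->
  (forall s x x', gpath r s x -> gpath r' s x' -> kind (g x) = kind (g x')) ->
  forall tau k, Idx g l r tau k -> Idx g l' r' tau k ->
  exists s, gpath r s l /\ gpath r' s l'.
Proof.
move=> /is_absE Hl /is_absE Hl' Hk; elim=> [|d tau IH] k.
  by move=> /Idx_nilE [-> _] /Idx_nilE [-> _]; exists [::]; split; exact: path_nil.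
move=> /Idx_consE [[Pl ->]|[e [k0 [Pe I ->]]]]
       /Idx_consE [[Pl' Ek]|[e' [k0' [Pe' I' Ek]]]].
- by exists (d :: tau).
- by move: Ek; rewrite -(Hk _ _ _ Pl Pe') Hl.
- by move: Ek; rewrite (Hk _ _ _ Pe Pl') Hl'.
- by move: Ek; rewrite (Hk _ _ _ Pe Pe') => /addnI Ek; rewrite Ek in I; exact: IH I I'.
Qed.

Section ReadbackToSharing.
Variable Q : V -> V -> Prop.
Hypothesis Hpre : pre_lambda_graph g.
Hypothesis HQ : forall n m, Q n m -> same_readback g n m.

Lemma aligned_readback n m : aligned Q n m ->
  exists r r' tau u, [/\ Q r r', Readback g r tau n u & Readback g r' tau m u].
Proof.
case=> r [r' [tau [Qrr' P P']]]; have [t [Rr Rr']] := HQ Qrr'.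
by have [u [U U']] := Readback_along Rr Rr' P P'; exists r, r', tau, u.
Qed.

(* Aligned nodes have the kind of their common readback. *)
Lemma aligned_homogeneous : homogeneous g (aligned Q).
Proof.
apply/homogeneousP => n m /aligned_readback [r [r' [tau [u [_ U U']]]]].
by rewrite (Readback_kind U) (Readback_kind U').
Qed.

Lemma aligned_propagated : propagated g (aligned Q).
Proof.
apply/propagatedP => m m' d c c' [r [r' [tau [Qrr' P P']]]] Cc Cc'.
by exists r, r', (d :: tau); split=> //; apply/path_cons; [exists m|exists m'].
Qed.

(* Equal readbacks of free variables force equal atoms, hence equal nodes. *)
Lemma aligned_open : open_rel g (aligned Q).
Proof.
move=> n m a b /aligned_readback [r [r' [tau [u [_ U U']]]]] En Em.
have := Readback_kind U; rewrite En.
case: u U U' => // a' /Readback_leaf Ea /Readback_leaf Eb _.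
by case: Hpre => _ Hatoms; exact: Hatoms Ea Eb.
Qed.

(* Equal indices of bound variables force aligned binders. *)
Lemma aligned_var : closed_var g (aligned Q).
Proof.
move=> n m l l' [r [r' [tau [Qrr' P P']]]] En Em.
have [t [Rr Rr']] := HQ Qrr'.
have Hk s x x' : gpath r s x -> gpath r' s x' -> kind (g x) = kind (g x').
  move=> Px Px'; have [v [Rv Rv']] := Readback_along Rr Rr' Px Px'.
  by rewrite (Readback_kind Rv) (Readback_kind Rv').
have [u [U U']] := Readback_along Rr Rr' P P'.
have := Readback_kind U; rewrite En.
case: u U U' => // k /Readback_leaf [l1 El1 I] /Readback_leaf [l1' El1' I'] _.
move: El1 El1' I I'; rewrite En Em => -[<-] -[<-] I I'.
have [Hbinder _] := Hpre.
have [s [Ps Ps']] := Idx_aligned (Hbinder _ _ En) (Hbinder _ _ Em) Hk I I'.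
by exists r, r', s.
Qed.

Lemma spread_aligned n m :
  spread g Q n m <-> clos_refl_sym_trans V (aligned Q) n m.
Proof.
split.
- apply: spread_least => [||{}n {}m Qnm].
  + exact: closure_propagated aligned_homogeneous aligned_propagated.
  + by split; [exact: rst_refl|split; [exact: rst_sym|exact: rst_trans]].
  + by apply: rst_step; exists n, m, [::]; split=> //; exact: path_nil.
- elim=> [? ? /aligned_spread //|?|? ? _|? ? ? _ H1 _ H2].
  + exact: sp_refl.
  + exact: sp_sym.
  + exact: sp_trans H1 H2.
Qed.

Lemma spread_sharing : sharing_equivalence g (spread g Q).
Proof.
apply: (sharing_equivalence_ext (R := clos_refl_sym_trans V (aligned Q))).
  by move=> n m; rewrite spread_aligned.
exact: closure_sharing aligned_homogeneous aligned_propagated aligned_open aligned_var.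
Qed.

End ReadbackToSharing.

End LambdaGraphs.

Theorem mainTheorem3 (A : Type) (V : finType) (g : V -> node A V)
    (Q : V -> V -> Prop) :
  lambda_graph g -> query g Q ->
  (sharing_equivalence g (spread g Q) <->
   forall n m, Q n m -> same_readback g n m).
Proof.
move=> Hlg HQroots; split=> [Hsharing n m Qnm|HQ].
- have [Rn Rm] := HQroots _ _ Qnm.
  have [t Rt] := Readback_exists Hlg Rn (path_nil g n).
  exists t; split=> //.
  exact: (Readback_transfer Hlg Hsharing (sp_base g Qnm) Rm Rt (path_nil g m)).
- by case: Hlg => Hpre _; exact: spread_sharing Hpre HQ.
Qed.
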